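(* Let $(X,d)$ be a compact metric space and $\emptyset\neq F\subseteq X$ with a representation $(\tilde F_k)$ w.r.t. which $F$ is explicitly closed. Let $G,H:\mathbb{R}_+\to\mathbb{R}_+$ satisfy properties (G) and (H). Assume that the sequence $(x_n)$ in $X$ is $(G,H)$-Fej\'er monotone with respect to $F$ and has approximate $F$-points. Then $(x_n)$ converges to a point $x\in F$.
   Context: A representation of $F$ is a family $(\tilde F_k)_{k\in\mathbb{N}}$ of subsets of $X$ with $F=\bigcap_k\tilde F_k$; $AF_k:=\bigcap_{l\le k}\tilde F_l$. $(x_n)$ has approximate $F$-points if for all $k$ there is $N$ with $x_N\in AF_k$. $F$ is explicitly closed if for every $p\in X$: if $AF_M\cap\overline B(p,1/(N+1))\ne\emptyset$ for all $N,M\in\mathbb{N}$, then $p\in F$. Property (G): $a_n\to0$ implies $G(a_n)\to0$ for all sequences $(a_n)$ in $\mathbb{R}_+$; property (H): $H(a_n)\to0$ implies $a_n\to0$ for all sequences $(a_n)$ in $\mathbb{R}_+$. $(x_n)$ is $(G,H)$-Fej\'er monotone w.r.t. $F$ if $H(d(x_{n+m},p))\le G(d(x_n,p))$ for all $n,m\in\mathbb{N}$, $p\in F$. *)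

From Stdlib Require Import Reals Lra List.
Open Scope R_scope.

Record MetricSpace := {
  carrier :> Type;
  dist : carrier -> carrier -> R;
  dist_nonneg : forall x y, 0 <= dist x y;
  dist_eq0 : forall x y, dist x y = 0 <-> x = y;
  dist_sym : forall x y, dist x y = dist y x;
  dist_tri : forall x y z, dist x z <= dist x y + dist y z
}.

Section Metric.
Variable X : MetricSpace.

Definition is_open (U : X -> Prop) : Prop :=
  forall x, U x -> exists eps, 0 < eps /\ forall y, dist X x y < eps -> U y.

Definition compact_space : Prop :=
  forall (I : Type) (U : I -> X -> Prop),
    (forall i, is_open (U i)) -> (forall x, exists i, U i x) ->
    exists l : list I, forall x, exists i, In i l /\ U i x.

Definition cball (p : X) (r : R) (y : X) : Prop := dist X p y <= r.

Definition representation (F : X -> Prop) (Ft : nat -> X -> Prop) : Prop :=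
  forall x, F x <-> (forall k, Ft k x).

Definition AF (Ft : nat -> X -> Prop) (k : nat) (x : X) : Prop :=
  forall l, (l <= k)%nat -> Ft l x.

Definition has_approx_F_points (Ft : nat -> X -> Prop) (x : nat -> X) : Prop :=
  forall k, exists N, AF Ft k (x N).

Definition explicitly_closed (F : X -> Prop) (Ft : nat -> X -> Prop) : Prop :=
  forall p : X,
    (forall N M : nat, exists y, AF Ft M y /\ cball p (1 / (INR N + 1)) y) ->
    F p.

Definition GH_Fejer_monotone (G H : R -> R) (F : X -> Prop) (x : nat -> X) : Prop :=
  forall (n m : nat) (p : X), F p -> H (dist X (x (n + m)%nat) p) <= G (dist X (x n) p).

Definition converges_to (x : nat -> X) (a : X) : Prop :=
  forall eps, 0 < eps -> exists N, forall n, (N <= n)%nat -> dist X (x n) a < eps.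

End Metric.

(** Self-maps of R_+ (functions on R whose values on [0,oo) are in [0,oo)). *)
Definition maps_nonneg (G : R -> R) : Prop := forall t, 0 <= t -> 0 <= G t.

Definition property_G (G : R -> R) : Prop :=
  forall a : nat -> R, (forall n, 0 <= a n) ->
    Un_cv a 0 -> Un_cv (fun n => G (a n)) 0.

Definition property_H (H : R -> R) : Prop :=
  forall a : nat -> R, (forall n, 0 <= a n) ->
    Un_cv (fun n => H (a n)) 0 -> Un_cv a 0.

(* A compact space gives the subsequence of approximate F-points a cluster
   point p; explicit closedness puts p in F.  Along a subsequence x_(m j) -> p,
   so G(d(x_(m j), p)) -> 0 by (G), and Fejér monotonicity bounds every later
   H(d(x_n, p)) by such a value; hence H(d(x_n, p)) -> 0 and (H) gives
   x_n -> p. *)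
From Pilot Require Import Defs.
From Stdlib Require Import Reals Lra Lia List Classical IndefiniteDescription.
Open Scope R_scope.

Lemma inv_INR_succ_pos (n : nat) : 0 < 1 / (INR n + 1).
Proof. pose proof (pos_INR n). apply Rdiv_lt_0_compat; lra. Qed.

Lemma Un_cv_0_le_inv_INR_succ (a : nat -> R) :
  (forall j, 0 <= a j <= 1 / (INR j + 1)) -> Un_cv a 0.
Proof.
  intros Ha e He. destruct (archimed_cor1 e He) as [N [HN HN0]].
  exists N. intros j Hj. unfold R_dist. rewrite Rminus_0_r.
  destruct (Ha j) as [Ha0 Ha1]. rewrite Rabs_right by lra.
  apply le_INR in Hj. apply lt_0_INR in HN0.
  assert (/ (INR j + 1) <= / INR N) by (apply Rinv_le_contravar; lra).
  unfold Rdiv in Ha1. lra.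
Qed.

Section Compactness.
Variable X : MetricSpace.

Definition cluster_point (y : nat -> X) (p : X) : Prop :=
  forall eps, 0 < eps -> forall K, exists k, (K <= k)%nat /\ Defs.dist X (y k) p < eps.

(* A ball around [p] that [y] eventually avoids: these balls cover [X] when
   [y] has no cluster point. *)
Record avoided_ball (y : nat -> X) := {
  center : X;
  radius : R;
  avoided_from : nat;
  radius_pos : 0 < radius;
  avoided : forall k, (avoided_from <= k)%nat -> radius <= Defs.dist X (y k) center }.

Lemma le_fold_right_max (A : Type) (f : A -> nat) (l : list A) (a : A) :
  In a l -> (f a <= fold_right max 0%nat (map f l))%nat.
Proof.
  induction l as [|b l IH]; simpl; [tauto|].
  intros [<-|Ha]; [lia|]. specialize (IH Ha). lia.
Qed.

Lemma compact_cluster_point (y : nat -> X) :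
  compact_space X -> exists p, cluster_point y p.
Proof.
  intros Hc. apply NNPP. intros Hnone.
  destruct (Hc (avoided_ball y)
               (fun b z => Defs.dist X (center y b) z < radius y b)) as [l Hl].
  - intros b z Hz. exists (radius y b - Defs.dist X (center y b) z). split; [lra|].
    intros w Hw. pose proof (Defs.dist_tri X (center y b) z w). lra.
  - intros z.
    destruct (not_all_ex_not _ _ (not_ex_all_not _ _ Hnone z)) as [eps Heps].
    destruct (imply_to_and _ _ Heps) as [Heps_pos HK].
    destruct (not_all_ex_not _ _ HK) as [K HfarK].
    assert (Hfar : forall k, (K <= k)%nat -> eps <= Defs.dist X (y k) z).
    { intros k Hk. apply Rnot_lt_le. intros Hlt. apply HfarK. now exists k. }
    exists (Build_avoided_ball y z eps K Heps_pos Hfar). simpl.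
    assert (Defs.dist X z z = 0) by now apply Defs.dist_eq0. lra.
  - set (M := fold_right max 0%nat (map (avoided_from y) l)).
    destruct (Hl (y M)) as [b [Hb Hd]].
    pose proof (avoided y b M (le_fold_right_max _ _ _ _ Hb)).
    rewrite Defs.dist_sym in Hd. lra.
Qed.

Lemma cluster_point_subseq (y : nat -> X) (p : X) :
  cluster_point y p -> exists m : nat -> nat, Un_cv (fun j => Defs.dist X (y (m j)) p) 0.
Proof.
  intros Hp.
  assert (Hnear : forall j, exists k, Defs.dist X (y k) p < 1 / (INR j + 1)).
  { intros j. destruct (Hp _ (inv_INR_succ_pos j) 0%nat) as [k [_ Hk]]. now exists k. }
  destruct (functional_choice _ Hnear) as [m Hm].
  exists m. apply Un_cv_0_le_inv_INR_succ. intros j.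
  split; [apply Defs.dist_nonneg | left; apply Hm].
Qed.

Lemma AF_le (Ft : nat -> X -> Prop) (k M : nat) (z : X) :
  (M <= k)%nat -> AF X Ft k z -> AF X Ft M z.
Proof. intros HMk Hz l Hl. apply Hz. lia. Qed.

Lemma explicitly_closed_cluster_point (F : X -> Prop) (Ft : nat -> X -> Prop)
  (y : nat -> X) (p : X) :
  explicitly_closed X F Ft -> (forall k, AF X Ft k (y k)) ->
  cluster_point y p -> F p.
Proof.
  intros Hcl Hy Hp. apply Hcl. intros N M.
  destruct (Hp _ (inv_INR_succ_pos N) M) as [k [Hk Hd]].
  exists (y k). split.
  - exact (AF_le Ft k M _ Hk (Hy k)).
  - unfold cball. rewrite Defs.dist_sym. lra.
Qed.

Lemma Fejer_subseq_converges (G H : R -> R) (F : X -> Prop) (x : nat -> X)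
  (p : X) (m : nat -> nat) :
  maps_nonneg H -> property_G G -> property_H H ->
  GH_Fejer_monotone X G H F x -> F p ->
  Un_cv (fun j => Defs.dist X (x (m j)) p) 0 ->
  Un_cv (fun n => Defs.dist X (x n) p) 0.
Proof.
  intros HHnn HG HH HF Fp Hsub.
  pose proof (HG _ (fun j => Defs.dist_nonneg X _ _) Hsub) as HGsub.
  apply HH; [intros; apply Defs.dist_nonneg|].
  intros eps Heps. destruct (HGsub eps Heps) as [J HJ].
  specialize (HJ J (Nat.le_refl J)). unfold R_dist in HJ. rewrite Rminus_0_r in HJ.
  exists (m J). intros n Hn. unfold R_dist. rewrite Rminus_0_r.
  pose proof (HHnn _ (Defs.dist_nonneg X (x n) p)).
  rewrite Rabs_right by lra.
  pose proof (HF (m J) (n - m J)%nat p Fp) as HFn.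
  replace (m J + (n - m J))%nat with n in HFn by lia.
  pose proof (Rle_abs (G (Defs.dist X (x (m J)) p))). lra.
Qed.

Lemma Un_cv_dist_converges_to (x : nat -> X) (p : X) :
  Un_cv (fun n => Defs.dist X (x n) p) 0 -> converges_to X x p.
Proof.
  intros Hcv eps Heps. destruct (Hcv eps Heps) as [N HN]. exists N. intros n Hn.
  specialize (HN n Hn). unfold R_dist in HN. rewrite Rminus_0_r in HN.
  now rewrite Rabs_right in HN by apply Rle_ge, dist_nonneg.
Qed.

End Compactness.

Theorem proposition4p3 (X : MetricSpace) (F : X -> Prop) (Ft : nat -> X -> Prop)
  (G H : R -> R) (x : nat -> X) :
  compact_space X ->
  (exists p, F p) ->
  representation X F Ft ->
  explicitly_closed X F Ft ->
  maps_nonneg G -> maps_nonneg H ->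
  property_G G -> property_H H ->
  GH_Fejer_monotone X G H F x ->
  has_approx_F_points X Ft x ->
  exists a : X, F a /\ converges_to X x a.
Proof.
  intros Hc _ _ Hcl _ HHnn HG HH HF Happ.
  destruct (functional_choice _ Happ) as [N HN].
  destruct (compact_cluster_point X (fun k => x (N k)) Hc) as [p Hp].
  pose proof (explicitly_closed_cluster_point X F Ft _ p Hcl HN Hp) as Fp.
  destruct (cluster_point_subseq X _ p Hp) as [m Hm].
  exists p. split; [exact Fp|].
  apply Un_cv_dist_converges_to.
  exact (Fejer_subseq_converges X G H F x p (fun j => N (m j)) HHnn HG HH HF Fp Hm).
Qed.
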